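(* Let $\Gamma^*$ be a group of permutations of $\mathbb Q\times\mathbb Z$ with $\Gamma^*\supseteq\Gamma(+1)$. If $\Gamma^*$ contains at least one negative permutation, then $\Gamma^*$ contains all negative permutations of $\mathbb Q\times\mathbb Z$.
   Context: $\mathbb Q\times\mathbb Z$ denotes the set $\mathbb Q\times\mathbb Z$ with the lexicographic order. A vertical is a set $\{r\}\times\mathbb Z$. A permutation is systemic if it maps every vertical onto a vertical; a systemic permutation is positive if it preserves the order on each vertical and negative if it reverses the order on each vertical. $\Gamma(+1)$ is the group of all positive permutations of $\mathbb Q\times\mathbb Z$ (the automorphism group of the successor relation). *)

From mathcomp Require Import all_boot all_order all_algebra.
Set Implicit Arguments. Unset Strict Implicit. Unset Printing Implicit Defensive.
Import Order.TTheory GRing.Theory Num.Theory.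
Local Open Scope ring_scope.

Definition QZ := (rat * int)%type.

Definition vertical (r : rat) (p : QZ) : Prop := p.1 = r.

Definition is_perm (f : QZ -> QZ) : Prop := bijective f.

Definition systemic (f : QZ -> QZ) : Prop :=
  is_perm f /\
  forall r : rat, exists s : rat,
    forall p : QZ, vertical s p <-> exists q : QZ, vertical r q /\ f q = p.

Definition positive (f : QZ -> QZ) : Prop :=
  systemic f /\
  forall (r : rat) (m n : int), m < n -> (f (r, m)).2 < (f (r, n)).2.

Definition negative (f : QZ -> QZ) : Prop :=
  systemic f /\
  forall (r : rat) (m n : int), m < n -> (f (r, n)).2 < (f (r, m)).2.

Definition perm_group (G : (QZ -> QZ) -> Prop) : Prop :=
  (forall f, G f -> is_perm f) /\
  G (fun x => x) /\
  (forall f g, G f -> G g -> G (f \o g)) /\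
  (forall f, G f -> exists g, G g /\ cancel f g /\ cancel g f).

(* Negative permutations reverse the order on every vertical, so the composite of two of
   them is positive, and the inverse of a negative permutation is negative.  Hence for a
   negative f0 in the group and any negative f, the positive permutation f0^-1 \o f lies in
   the group, and so does f = f0 \o (f0^-1 \o f). *)
From mathcomp Require Import all_boot all_order all_algebra.
From Stdlib Require Import FunctionalExtensionality.
Import Order.TTheory GRing.Theory Num.Theory.
Local Open Scope ring_scope.

Lemma systemicP (f : QZ -> QZ) :
  systemic f <-> bijective f /\ forall p q, ((f p).1 == (f q).1) = (p.1 == q.1).
Proof.
split=> [[[g fK gK] fV] | [[g fK gK] fV]].
  split=> [|p q]; first by exists g.
  have [s sV] := fV p.1.
  have fp_s : vertical s (f p) by apply/sV; exists p.
  apply/eqP/eqP => [fpq | pq].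
    have [q' [q'p fq'q]] := (sV (f q)).1 (etrans (esym fpq) fp_s).
    by rewrite -(fK q) -fq'q fK.
  have fq_s : vertical s (f q) by apply/sV; exists q; rewrite /vertical pq.
  by rewrite fp_s fq_s.
split; first by exists g.
move=> r; exists (f (r, 0)).1 => p; split=> [ps | [q [qr <-]]].
  exists (g p); split; last exact: gK.
  have : (f (g p)).1 == (f (r, 0)).1 by rewrite gK ps.
  by rewrite fV => /eqP.
by rewrite /vertical; apply/eqP; rewrite fV qr.
Qed.

Lemma systemic_comp {f g : QZ -> QZ} : systemic f -> systemic g -> systemic (f \o g).
Proof.
move=> /systemicP[f_bij fV] /systemicP[g_bij gV]; apply/systemicP.
by split=> [|p q /=]; [exact: bij_comp | rewrite fV gV].
Qed.

Lemma systemic_inv {f g : QZ -> QZ} :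
  systemic f -> cancel f g -> cancel g f -> systemic g.
Proof.
move=> /systemicP[_ fV] fK gK; apply/systemicP.
by split=> [|p q]; [exists f | rewrite -fV !gK].
Qed.

Lemma systemic_on_vertical {f : QZ -> QZ} (r : rat) (m : int) :
  systemic f -> f (r, m) = ((f (r, 0)).1, (f (r, m)).2).
Proof.
move=> /systemicP[_ fV]; rewrite [LHS]surjective_pairing.
by congr (_, _); apply/eqP; rewrite fV.
Qed.

Lemma negative_comp {f g : QZ -> QZ} : negative f -> negative g -> positive (f \o g).
Proof.
move=> [fS f_rev] [gS g_rev]; split; first exact: systemic_comp.
move=> r m n mn /=.
by rewrite (systemic_on_vertical _ m gS) (systemic_on_vertical _ n gS); apply/f_rev/g_rev.
Qed.

Lemma negative_inv {f g : QZ -> QZ} :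
  negative f -> cancel f g -> cancel g f -> negative g.
Proof.
move=> [fS f_rev] fK gK; have gS := systemic_inv fS fK gK; split=> // r m n mn.
set s := (g (r, 0)).1.
have f_lt : {mono (fun k => (f (s, k)).2) : k l /~ k < l}.
  by apply/leW_nmono/le_nmono => k l; apply: f_rev.
have gE k : (f (s, (g (r, k)).2)).2 = k by rewrite -systemic_on_vertical // gK.
by rewrite -f_lt !gE.
Qed.

Theorem proposition3 (G : (QZ -> QZ) -> Prop) :
  perm_group G ->
  (forall f, positive f -> G f) ->
  (exists f, negative f /\ G f) ->
  forall f, negative f -> G f.
Proof.
move=> [_ [_ [G_comp G_inv]]] G_pos [f0 [f0_neg G_f0]] f f_neg.
have [g0 [_ [f0K g0K]]] := G_inv f0 G_f0.
have g0_neg := negative_inv f0_neg f0K g0K.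
have -> : f = f0 \o (g0 \o f) by apply: functional_extensionality => x /=; rewrite g0K.
exact/G_comp/G_pos/negative_comp.
Qed.
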